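(* For every CF program $\mathtt{p}$ there is a polynomial $\pi$ such that $\#\mathit{Reach}_{\mathtt{p}}(x) \le \pi(|x|)$ for all $x \in \{0,1\}^*$.
   Context: CF (''cons-free'') is a first-order, call-by-value functional language over booleans and bit lists $\{0,1\}^*$. A program is a finite sequence of mutually recursive function definitions $\mathtt{f\ x1 \dots xm = e}$ ($m\ge0$), the first being a one-argument entry function. Expressions are $\mathtt{True}$, $\mathtt{False}$, $\mathtt{[]}$, variables, base calls $\mathtt{not}$, $\mathtt{null}$, $\mathtt{head}$, $\mathtt{tail}$, conditionals $\mathtt{if\ e_0\ then\ e_1\ else\ e_2}$, and calls $\mathtt{f\ e_1\dots e_m}$ of defined functions; there are no list constructors. Semantics is standard big-step call-by-value evaluation: a call evaluates its arguments to values $w_i$ and then evaluates the body of $\mathtt{f}$ in the environment $\rho=[\mathtt{x1}\mapsto w_1,\dots,\mathtt{xm}\mapsto w_m]$; the program on input $x$ starts by evaluating the entry body in $[\mathtt{x}\mapsto x]$. $\mathit{Reach}_{\mathtt{p}}(x)$ is the set of pairs $(\mathtt{f},\rho)$ such that the body of the defined function $\mathtt{f}$ is called at least once with environment $\rho$ during the computation of $\mathtt{p}$ on input $x$; $\#$ denotes cardinality. *)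

From Stdlib Require Import List ZArith.
Import ListNotations.

(* Values: booleans and bit lists ({0,1}^* as list bool, 0 = false, 1 = true). *)
Inductive value : Type :=
| VB (b : bool)
| VL (l : list bool).

(* Expressions. Variables are de Bruijn-style indices into the environment
   (EVar i denotes x(i+1)); defined functions are indices into the program. *)
Inductive expr : Type :=
| ETrue | EFalse | ENil
| EVar (i : nat)
| ENot (e : expr) | ENull (e : expr) | EHead (e : expr) | ETail (e : expr)
| EIf (e0 e1 e2 : expr)
| ECall (f : nat) (es : list expr).

(* A program: list of definitions (arity m, body); the first is the entry. *)
Definition program := list (nat * expr).
Definition env := list value.

Inductive wf_expr (p : program) (m : nat) : expr -> Prop :=
| wf_True : wf_expr p m ETrue
| wf_False : wf_expr p m EFalse
| wf_Nil : wf_expr p m ENil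
| wf_Var i : i < m -> wf_expr p m (EVar i)
| wf_Not e : wf_expr p m e -> wf_expr p m (ENot e)
| wf_Null e : wf_expr p m e -> wf_expr p m (ENull e)
| wf_Head e : wf_expr p m e -> wf_expr p m (EHead e)
| wf_Tail e : wf_expr p m e -> wf_expr p m (ETail e)
| wf_If e0 e1 e2 : wf_expr p m e0 -> wf_expr p m e1 -> wf_expr p m e2 ->
    wf_expr p m (EIf e0 e1 e2)
| wf_Call f es k body : nth_error p f = Some (k, body) -> length es = k ->
    (forall e, In e es -> wf_expr p m e) -> wf_expr p m (ECall f es).

Definition wf_program (p : program) : Prop :=
  (exists body, nth_error p 0 = Some (1, body)) /\
  (forall m body, In (m, body) p -> wf_expr p m body).

(* Big-step call-by-value evaluation (head/tail of [] have no value). *)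
Inductive eval (p : program) (rho : env) : expr -> value -> Prop :=
| ev_True : eval p rho ETrue (VB true)
| ev_False : eval p rho EFalse (VB false)
| ev_Nil : eval p rho ENil (VL [])
| ev_Var i v : nth_error rho i = Some v -> eval p rho (EVar i) v
| ev_Not e b : eval p rho e (VB b) -> eval p rho (ENot e) (VB (negb b))
| ev_Null e l : eval p rho e (VL l) ->
    eval p rho (ENull e) (VB (match l with [] => true | _ => false end))
| ev_Head e b l : eval p rho e (VL (b :: l)) -> eval p rho (EHead e) (VB b)
| ev_Tail e b l : eval p rho e (VL (b :: l)) -> eval p rho (ETail e) (VL l)
| ev_IfT e0 e1 e2 v : eval p rho e0 (VB true) -> eval p rho e1 v ->
    eval p rho (EIf e0 e1 e2) v
| ev_IfF e0 e1 e2 v : eval p rho e0 (VB false) -> eval p rho e2 v ->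
    eval p rho (EIf e0 e1 e2) v
| ev_Call f es ws m body v : evals p rho es ws ->
    nth_error p f = Some (m, body) -> length ws = m ->
    eval p ws body v -> eval p rho (ECall f es) v
with evals (p : program) (rho : env) : list expr -> list value -> Prop :=
| evs_nil : evals p rho [] []
| evs_cons e es w ws : eval p rho e w -> evals p rho es ws ->
    evals p rho (e :: es) (w :: ws).

(* reach p rho e (g, sigma): during the (possibly non-terminating) evaluation of
   e in environment rho, the body of g is called with environment sigma.
   Arguments are evaluated left to right. *)
Inductive reach (p : program) (rho : env) : expr -> nat * env -> Prop :=
| r_Not e c : reach p rho e c -> reach p rho (ENot e) c
| r_Null e c : reach p rho e c -> reach p rho (ENull e) c
| r_Head e c : reach p rho e c -> reach p rho (EHead e) c
| r_Tail e c : reach p rho e c -> reach p rho (ETail e) c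
| r_If0 e0 e1 e2 c : reach p rho e0 c -> reach p rho (EIf e0 e1 e2) c
| r_If1 e0 e1 e2 c : eval p rho e0 (VB true) -> reach p rho e1 c ->
    reach p rho (EIf e0 e1 e2) c
| r_If2 e0 e1 e2 c : eval p rho e0 (VB false) -> reach p rho e2 c ->
    reach p rho (EIf e0 e1 e2) c
| r_CallArg f es c : reach_args p rho es c -> reach p rho (ECall f es) c
| r_CallHere f es ws m body : evals p rho es ws ->
    nth_error p f = Some (m, body) -> length ws = m ->
    reach p rho (ECall f es) (f, ws)
| r_CallBody f es ws m body c : evals p rho es ws ->
    nth_error p f = Some (m, body) -> length ws = m ->
    reach p ws body c -> reach p rho (ECall f es) c
with reach_args (p : program) (rho : env) : list expr -> nat * env -> Prop :=
| ra_head e es c : reach p rho e c -> reach_args p rho (e :: es) c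
| ra_tail e es w c : eval p rho e w -> reach_args p rho es c ->
    reach_args p rho (e :: es) c.

(* Reach_p(x): pairs (f, rho) such that the body of f is called with rho in the
   computation of p on input x (the initial call of the entry body included). *)
Definition Reach (p : program) (x : list bool) (c : nat * env) : Prop :=
  exists body, nth_error p 0 = Some (1, body) /\
    (c = (0, [VL x]) \/ reach p [VL x] body c).

(* Polynomials with integer coefficients (constant term first), Horner. *)
Fixpoint peval (cs : list Z) (n : Z) : Z :=
  match cs with
  | [] => 0%Z
  | a :: cs' => (a + n * peval cs' n)%Z
  end.

(* A cons-free program never builds a new list: on input x every value it
   computes is a boolean or a suffix of x, so only |x| + 3 values ever occur.
   A reached pair (f, rho) therefore consists of one of the definitions of p
   and an environment of the arity m_f of f over these values, which leaves at
   most the sum over the definitions of (|x| + 3)^(m_f) possibilities. *)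
From Stdlib Require Import List ZArith Lia.
Import ListNotations.

Scheme eval_mut := Induction for eval Sort Prop
with evals_mut := Induction for evals Sort Prop.
Scheme reach_mut := Induction for reach Sort Prop
with reach_args_mut := Induction for reach_args Sort Prop.

Section ClosedValues.

Variable U : list value.

Definition closed_values : Prop :=
  In (VB true) U /\ In (VB false) U /\ In (VL []) U /\
  forall b l, In (VL (b :: l)) U -> In (VL l) U.

Hypothesis U_closed : closed_values.

Definition env_over (rho : env) : Prop := Forall (fun v => In v U) rho.

Lemma eval_in_closed p rho e v :
  eval p rho e v -> env_over rho -> In v U.
Proof.
  destruct U_closed as (Htrue & Hfalse & Hnil & Htail).
  revert rho e v.
  apply (eval_mut p (fun rho e v _ => env_over rho -> In v U)
                    (fun rho es ws _ => env_over rho -> env_over ws));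
    intros; auto.
  - exact (proj1 (Forall_forall _ _) H v (nth_error_In _ _ e)).
  - destruct b; assumption.
  - destruct l; assumption.
  - destruct b; assumption.
  - eauto.
  - constructor.
  - constructor; [apply H | apply H0]; assumption.
Qed.

Lemma evals_in_closed p rho es ws :
  evals p rho es ws -> env_over rho -> env_over ws.
Proof.
  induction 1; intro Hrho; constructor;
    [eapply eval_in_closed | apply IHevals]; eauto.
Qed.

Definition config_over (p : program) (c : nat * env) : Prop :=
  exists body, nth_error p (fst c) = Some (length (snd c), body) /\
    env_over (snd c).

Lemma reach_config_over p rho e c :
  reach p rho e c -> env_over rho -> config_over p c.
Proof.
  revert rho e c.
  apply (reach_mut p (fun rho e c _ => env_over rho -> config_over p c)
                     (fun rho es c _ => env_over rho -> config_over p c));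
    intros; subst; eauto using evals_in_closed.
  exists body; eauto using evals_in_closed.
Qed.

End ClosedValues.

Fixpoint suffixes (l : list bool) : list (list bool) :=
  l :: match l with [] => [] | _ :: t => suffixes t end.

Lemma length_suffixes l : length (suffixes l) = S (length l).
Proof. induction l; simpl; auto. Qed.

Lemma in_suffixes_self l : In l (suffixes l).
Proof. destruct l; simpl; auto. Qed.

Lemma in_suffixes_nil x : In [] (suffixes x).
Proof. induction x; simpl; auto. Qed.

Lemma in_suffixes_tail x b l : In (b :: l) (suffixes x) -> In l (suffixes x).
Proof.
  induction x as [|a x IH]; simpl; intros [Hx | Hx]; try easy.
  - injection Hx as -> ->. right. apply in_suffixes_self.
  - right. auto.
Qed.

Definition values_on (x : list bool) : list value :=
  VB true :: VB false :: map VL (suffixes x).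

Lemma length_values_on x : length (values_on x) = length x + 3.
Proof. simpl. rewrite length_map, length_suffixes. lia. Qed.

Lemma in_values_on x l : In l (suffixes x) -> In (VL l) (values_on x).
Proof. right; right. now apply in_map. Qed.

Lemma values_on_closed x : closed_values (values_on x).
Proof.
  split; [now left|]. split; [right; now left|].
  split; [apply in_values_on, in_suffixes_nil|].
  intros b l [H | [H | H]]; try discriminate.
  apply in_map_iff in H as [l' [E H]]. injection E as ->.
  eapply in_values_on, in_suffixes_tail; eauto.
Qed.

Fixpoint tuples {A : Type} (U : list A) (k : nat) : list (list A) :=
  match k with
  | 0 => [[]]
  | S k => flat_map (fun v => map (cons v) (tuples U k)) U
  end.

Lemma length_tuples {A : Type} (U : list A) k :
  length (tuples U k) = length U ^ k.
Proof.
  induction k as [|k IHk]; simpl; auto.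
  rewrite <- IHk. clear IHk. generalize (tuples U k) as E; intro E.
  induction U as [|v U' IHU]; simpl; auto.
  rewrite length_app, length_map, IHU. lia.
Qed.

Lemma in_tuples {A : Type} (U : list A) ws :
  Forall (fun v => In v U) ws -> In ws (tuples U (length ws)).
Proof.
  induction 1; simpl; auto.
  apply in_flat_map. eauto using in_map.
Qed.

Fixpoint configs_from (U : list value) (f : nat) (ds : program)
  : list (nat * env) :=
  match ds with
  | [] => []
  | (m, _) :: ds' => map (pair f) (tuples U m) ++ configs_from U (S f) ds'
  end.

Lemma in_configs_from U ds : forall f j ws body,
  nth_error ds j = Some (length ws, body) -> env_over U ws ->
  In (f + j, ws) (configs_from U f ds).
Proof.
  induction ds as [|[m b] ds IH]; intros f [|j] ws body Hj Hws;
    simpl in *; try discriminate; apply in_or_app.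
  - injection Hj as -> _. left. rewrite Nat.add_0_r.
    apply in_map, in_tuples, Hws.
  - right. rewrite <- Nat.add_succ_comm. eauto.
Qed.

Lemma config_over_in_configs_from U p c :
  config_over U p c -> In c (configs_from U 0 p).
Proof.
  destruct c as [f ws]; intros [body [Hf Hws]].
  exact (in_configs_from U p 0 f ws body Hf Hws).
Qed.

Fixpoint poly_add (a b : list Z) : list Z :=
  match a, b with
  | [], b => b
  | a, [] => a
  | x :: a', y :: b' => (x + y)%Z :: poly_add a' b'
  end.

Lemma peval_add a : forall b n, peval (poly_add a b) n = (peval a n + peval b n)%Z.
Proof.
  induction a; intros [|y b] n; simpl; try ring. rewrite IHa. ring.
Qed.

Lemma peval_scale c a n : peval (map (Z.mul c) a) n = (c * peval a n)%Z.
Proof. induction a as [|y a IH]; simpl; [ring|]. rewrite IH. ring. Qed.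

Definition poly_mul_X_add (c : Z) (a : list Z) : list Z :=
  poly_add (map (Z.mul c) a) (0%Z :: a).

Lemma peval_mul_X_add c a n :
  peval (poly_mul_X_add c a) n = ((n + c) * peval a n)%Z.
Proof.
  unfold poly_mul_X_add. rewrite peval_add, peval_scale. simpl. ring.
Qed.

Fixpoint poly_X_add_pow (c : Z) (k : nat) : list Z :=
  match k with
  | 0 => [1%Z]
  | S k => poly_mul_X_add c (poly_X_add_pow c k)
  end.

Lemma peval_X_add_pow c k n :
  peval (poly_X_add_pow c k) n = ((n + c) ^ Z.of_nat k)%Z.
Proof.
  induction k as [|k IHk]; cbn [poly_X_add_pow].
  - cbn [peval Z.of_nat]. ring.
  - rewrite peval_mul_X_add, IHk, Nat2Z.inj_succ, Z.pow_succ_r by lia. ring.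
Qed.

Definition configs_poly (c : Z) (ds : program) : list Z :=
  fold_right (fun d acc => poly_add (poly_X_add_pow c (fst d)) acc) [] ds.

Lemma length_configs_from U c n ds : forall f,
  Z.of_nat (length U) = (n + c)%Z ->
  Z.of_nat (length (configs_from U f ds)) = peval (configs_poly c ds) n.
Proof.
  induction ds as [|[m b] ds IH]; intros f HU; simpl; auto.
  rewrite length_app, length_map, length_tuples, Nat2Z.inj_add, Nat2Z.inj_pow,
    HU, peval_add, peval_X_add_pow, IH by exact HU.
  reflexivity.
Qed.

Theorem lemma3 : forall p : program, wf_program p ->
  exists pi : list Z, forall (x : list bool) (L : list (nat * env)),
    NoDup L -> (forall c, In c L -> Reach p x c) ->
    (Z.of_nat (length L) <= peval pi (Z.of_nat (length x)))%Z.
Proof.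
  intros p _. exists (configs_poly 3 p). intros x L HL Hreach.
  set (U := values_on x).
  assert (Hinput : env_over U [VL x]).
  { constructor; [apply in_values_on, in_suffixes_self | constructor]. }
  rewrite <- (length_configs_from U 3 _ p 0)
    by (unfold U; rewrite length_values_on; lia).
  apply Nat2Z.inj_le, NoDup_incl_length; [exact HL|].
  intros c Hc. apply config_over_in_configs_from.
  destruct (Hreach c Hc) as [body [Hentry [-> | Hc']]].
  - now exists body.
  - exact (reach_config_over U (values_on_closed x) p _ _ c Hc' Hinput).
Qed.
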